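(* Assume the subgraph $\mathcal G_{\sigma(t)}$ is undirected for all $t\ge0$, and that there exist $T_{\mathrm c}>0$ and a subsequence $\{t_{j_k}:k=0,1,2,\dots\}$ of the switching instants with $t_{j_0}=0$ and $t_{j_{k+1}}-t_{j_k}\le T_{\mathrm c}$, such that for every $k$ every node $i\in\{1,\dots,N\}$ is reachable from node $0$ in the union graph $\bigcup_{t_j\in[t_{j_k},t_{j_{k+1}})}\bar{\mathcal G}_{\sigma(t_j)}$. Then there exists $0<\delta<1$ such that $$\left\|\prod_{r=j_k}^{j_{k+1}-1}P_{\sigma(t_r)}\right\|\le\delta\quad\text{for all }k=0,1,2,\dots.$$
   Context: $\sigma:[0,\infty)\to\mathcal P=\{1,\dots,n_0\}$ is a piecewise constant switching signal: there are switching instants $0=t_0<t_1<\cdots$ and a dwell time $\tau>0$ with $t_{j+1}-t_j\ge\tau$, and $\sigma$ is constant on each $[t_j,t_{j+1})$. For each $p\in\mathcal P$, $\bar{\mathcal G}_p$ is a graph on nodes $\{0,1,\dots,N\}$ with edge set $\bar{\mathcal E}_p$ of ordered pairs $(j,i)$, $j\ne i$; $a_{ij}(t)=1$ if $(j,i)\in\bar{\mathcal E}_{\sigma(t)}$, else $0$. $\mathcal G_{\sigma(t)}$ is the subgraph on $\{1,\dots,N\}$ with the edges of $\bar{\mathcal E}_{\sigma(t)}$ among those nodes (undirected: $(i,j)$ edge iff $(j,i)$ edge), with Laplacian $\mathcal L_{\sigma(t)}$ ($l_{ii}=\sum_{j=1}^Na_{ij}(t)$, $l_{ij}=-a_{ij}(t)$,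 $i\ne j$). $\Delta_{\sigma(t)}=\mathrm{diag}(a_{10}(t),\dots,a_{N0}(t))$, $\mathcal H_{\sigma(t)}=\mathcal L_{\sigma(t)}+\Delta_{\sigma(t)}$, and $P_{\sigma(t)}\in\mathbb{R}^{N\times N}$ is the orthogonal projection onto $\ker\mathcal H_{\sigma(t)}$ (zero matrix if the kernel is trivial). Node $i$ is reachable from $0$ if the graph has edges $(0,i_2),(i_2,i_3),\dots,(i_s,i)$; the union graph has the union of edge sets. $\prod_{r=m}^n\Xi_r=\Xi_n\cdots\Xi_{m+1}\Xi_m$. $\|\cdot\|$ is the matrix norm induced by the Euclidean norm. *)

From HB Require Import structures.
From mathcomp Require Import all_boot all_order all_algebra.
From mathcomp Require Import all_classical all_reals.
Set Implicit Arguments. Unset Strict Implicit. Unset Printing Implicit Defensive.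
Import Order.TTheory GRing.Theory Num.Theory.
Local Open Scope ring_scope.
Local Open Scope classical_set_scope.

(* Graphs on nodes {0,...,N} are encoded as relations E : rel 'I_N.+1,
   with  E j i  meaning  (j,i) is an edge (information flows from j to i).
   Follower node i in {1..N} (i : 'I_N, 0-based) is node  fnode i = i+1. *)
Definition fnode (N : nat) (i : 'I_N) : 'I_N.+1 := lift ord0 i.

Section Mats.
Variable R : realType.
Variable N : nat.
Variable E : rel 'I_N.+1.

Definition adj (i j : 'I_N) : R := (E (fnode j) (fnode i))%:R.
Definition adj0 (i : 'I_N) : R := (E ord0 (fnode i))%:R.

Definition lapl : 'M[R]_N :=
  \matrix_(i, j) (if i == j then \sum_(l < N) adj i l else - adj i j).
Definition Delta : 'M[R]_N := \matrix_(i, j) (if i == j then adj0 i else 0).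
Definition Hmat : 'M[R]_N := lapl + Delta.
End Mats.

Definition is_orth_proj_ker (R : realType) (N : nat) (H P : 'M[R]_N) : Prop :=
  [/\ P^T = P, P *m P = P,
      (forall x : 'cV[R]_N, H *m (P *m x) = 0) &
      (forall x : 'cV[R]_N, H *m x = 0 -> P *m x = x)].

Definition eucl_norm (R : realType) (N : nat) (x : 'cV[R]_N) : R :=
  Num.sqrt (\sum_(i < N) x i 0 ^+ 2).
Definition induced_norm (R : realType) (N : nat) (A : 'M[R]_N) : R :=
  sup [set eucl_norm (A *m x) | x in [set x : 'cV[R]_N | eucl_norm x <= 1]].

(* ordered product  \prod_{r=m}^{n-1} F r = F (n-1) * ... * F (m+1) * F m *)
Definition lprod (R : realType) (N : nat) (m n : nat) (F : nat -> 'M[R]_N)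
  : 'M[R]_N := \big[(fun A B => B *m A)/1%:M]_(m <= r < n) F r.

Definition union_graph (N n0 : nat) (E : 'I_n0 -> rel 'I_N.+1)
  (s : nat -> 'I_n0) (m n : nat) : rel 'I_N.+1 :=
  fun a b => [exists r : 'I_n, (m <= r)%N && E (s r) a b].

From HB Require Import structures.
From mathcomp Require Import all_boot all_order all_algebra.
From mathcomp Require Import all_classical all_reals.
From mathcomp Require Import ring lra zify.
Set Implicit Arguments. Unset Strict Implicit. Unset Printing Implicit Defensive.
Import Order.TTheory GRing.Theory Num.Theory.
Local Open Scope ring_scope.

(* Fix a window of n switching steps and a vector x, and let Y_s be x after
   the first s projections of the window.  The factors are orthogonal
   projections, so |x|^2 - |Y_n|^2 = D := sum_s |Y_s - Y_(s+1)|^2, and every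
   entry of Y_s is within n sqrt(D) of the corresponding entry of x.  Since the
   follower graph is undirected, H y = 0 forces y to be constant along follower
   edges and to vanish at followers linked to the leader (the quadratic form of
   H is a sum of squares).  Applied to Y_(s+1), which lies in ker H of the graph
   active at step s, this makes x, extended by 0 at the leader, change by at most
   2 n sqrt(D) along every edge of the union graph; reachability from the leader
   then gives |x_i| <= 2 N n sqrt(D), i.e. |x|^2 <= 4 N^3 n^2 D.  The dwell time
   bounds n uniformly, which turns this into a uniform contraction. *)

Lemma lprodSr (R : realType) (N : nat) (F : nat -> 'M[R]_N) m s :
  lprod m (m + s).+1 F = F (m + s)%N *m lprod m (m + s) F.
Proof.
elim: s m => [|s IH] m.
  by rewrite /lprod addn0 big_ltn // !big_geq // mul1mx mulmx1.
rewrite addnS -addSn /lprod !(big_ltn (m := m)); try lia.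
by rewrite -/(lprod _ _ _) IH mulmxA.
Qed.

Section SquaredNorm.
Variables (R : rcfType) (N : nat).

Definition sqnorm (v : 'cV[R]_N) : R := \sum_(i < N) v i 0 ^+ 2.

Lemma sqnorm_ge0 (v : 'cV[R]_N) : 0 <= sqnorm v.
Proof. by apply: sumr_ge0 => i _; rewrite sqr_ge0. Qed.

Lemma sqnormE (v : 'cV[R]_N) : sqnorm v = (v^T *m v) 0 0.
Proof. by rewrite mxE; apply: eq_bigr => i _; rewrite !mxE expr2. Qed.

Lemma sqr_entry_le_sqnorm (v : 'cV[R]_N) i : v i 0 ^+ 2 <= sqnorm v.
Proof. by rewrite /sqnorm (bigD1 i) //= lerDl sumr_ge0 // => j _; rewrite sqr_ge0. Qed.

Lemma norm_entry_le_sqnorm (v : 'cV[R]_N) i : `|v i 0| <= Num.sqrt (sqnorm v).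
Proof. by rewrite -sqrtr_sqr ler_sqrt ?sqnorm_ge0 ?sqr_entry_le_sqnorm. Qed.

Lemma sqnorm_orthproj (P : 'M[R]_N) (v : 'cV[R]_N) : P^T = P -> P *m P = P ->
  sqnorm v = sqnorm (P *m v) + sqnorm (v - P *m v).
Proof.
move=> PT PP.
have PvPv : (P *m v)^T *m (P *m v) = v^T *m (P *m v).
  by rewrite trmx_mul PT -mulmxA (mulmxA P) PP.
have Pvv : (P *m v)^T *m v = v^T *m (P *m v) by rewrite trmx_mul PT mulmxA.
rewrite !sqnormE !linearB /= !mulmxBl PvPv Pvv subrr subr0 !mxE.
by rewrite addrCA subrr addr0.
Qed.

Lemma sqnorm_telescope (F : nat -> 'M[R]_N) (Y : nat -> 'cV[R]_N) n :
  (forall s, (F s)^T = F s /\ F s *m F s = F s) ->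
  (forall s, Y s.+1 = F s *m Y s) ->
  sqnorm (Y 0%N) = sqnorm (Y n) + \sum_(s < n) sqnorm (Y s - Y s.+1).
Proof.
move=> F_proj YS; elim: n => [|n IH]; first by rewrite big_ord0 addr0.
have [FT FF] := F_proj n.
rewrite IH big_ord_recr /= (sqnorm_orthproj (Y n) FT FF) -YS.
by rewrite -!addrA [X in _ + X]addrC.
Qed.

Lemma entry_drift_le (Y : nat -> 'cV[R]_N) n s i : (s <= n)%N ->
  `|Y 0%N i 0 - Y s i 0| <= s%:R * Num.sqrt (\sum_(r < n) sqnorm (Y r - Y r.+1)).
Proof.
elim: s => [|s IH] lt_sn; first by rewrite subrr normr0 mul0r.
apply: (le_trans (ler_distD (Y s i 0) _ _)).
rewrite -natr1 mulrDl mul1r lerD ?IH 1?ltnW //.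
have -> : Y s i 0 - Y s.+1 i 0 = (Y s - Y s.+1) i 0 by rewrite !mxE.
apply: (le_trans (norm_entry_le_sqnorm _ _)).
rewrite ler_sqrt; last by apply: sumr_ge0 => r _; apply: sqnorm_ge0.
rewrite (bigD1 (Ordinal lt_sn)) //= lerDl.
by apply: sumr_ge0 => r _; apply: sqnorm_ge0.
Qed.

End SquaredNorm.

Section PathDistance.
Variables (R : numDomainType) (T : finType) (e : rel T) (f : T -> R) (a0 : T) (k : R).
Hypothesis edge_dist_le : forall a b, e a b -> b != a0 -> `|f a - f b| <= k.

Lemma path_dist_le a p : path e a p -> a0 \notin p ->
  `|f (last a p) - f a| <= (size p)%:R * k.
Proof.
elim: p a => [|b p IH] a /=; first by rewrite subrr normr0 mul0r.
rewrite inE negb_or => /andP[eab pth] /andP[ba0 a0p].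
apply: (le_trans (ler_distD (f b) _ _)).
rewrite -natr1 mulrDl mul1r lerD ?IH // distrC.
by apply: edge_dist_le; rewrite 1?eq_sym.
Qed.

Lemma connect_dist_le b : 0 <= k -> connect e a0 b ->
  `|f b - f a0| <= #|T|.-1%:R * k.
Proof.
move=> k_ge0 /connectP[p pth ->].
case: (shortenP pth) => p' pth' uniq_p' _.
have /andP[a0p' _] := uniq_p'.
apply: (le_trans (path_dist_le pth' a0p')).
have := max_card (mem (a0 :: p')); rewrite (card_uniqP uniq_p') /= => size_p'.
by apply: ler_wpM2r => //; rewrite ler_nat; lia.
Qed.

End PathDistance.

(* The leader (node 0) carries the value 0, so that both conditions defining
   ker H read "equal values at the two ends of an edge". *)
Definition node_val (R : zmodType) (N : nat) (v : 'cV[R]_N) (a : 'I_N.+1) : R :=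
  if unlift ord0 a is Some i then v i 0 else 0.

Lemma node_val_ord0 (R : zmodType) (N : nat) (v : 'cV[R]_N) : node_val v ord0 = 0.
Proof. by rewrite /node_val unlift_none. Qed.

Lemma node_val_fnode (R : zmodType) (N : nat) (v : 'cV[R]_N) i :
  node_val v (fnode i) = v i 0.
Proof. by rewrite /node_val /fnode liftK. Qed.

Lemma node_valB (R : zmodType) (N : nat) (u v : 'cV[R]_N) a :
  node_val (u - v) a = node_val u a - node_val v a.
Proof. by rewrite /node_val; case: unlift => [i|]; rewrite ?mxE ?subr0. Qed.

Section LaplacianKernel.
Variables (R : realType) (N : nat) (E : rel 'I_N.+1).
Hypothesis E_irrefl : forall a, ~~ E a a.
Hypothesis E_sym : forall i l : 'I_N, E (fnode l) (fnode i) = E (fnode i) (fnode l).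

Lemma Hmat_mulmx_entry (y : 'cV[R]_N) i : (Hmat R E *m y) i 0 =
  \sum_j adj R E i j * (y i 0 - y j 0) + adj0 R E i * y i 0.
Proof.
have adj_ii : adj R E i i = 0 by rewrite /adj (negbTE (E_irrefl _)).
have Hmat_ij j : Hmat R E i j =
    (i == j)%:R * (\sum_l adj R E i l + adj0 R E i) - adj R E i j.
  by rewrite !mxE; case: eqVneq => [<-|_]; rewrite ?adj_ii ?mul1r ?mul0r; ring.
rewrite mxE; under eq_bigr => j _ do rewrite Hmat_ij mulrBl.
rewrite sumrB [X in X - _](bigD1 i) //= eqxx mul1r [X in _ + X - _]big1 ?addr0; last first.
  by move=> j; rewrite eq_sym => /negbTE ->; rewrite !mul0r.
under [in RHS]eq_bigr => j _ do rewrite mulrBr.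
by rewrite sumrB -big_distrl /=; ring.
Qed.

Lemma Hmat_quad_form (y : 'cV[R]_N) : 2 * (y^T *m (Hmat R E *m y)) 0 0 =
  \sum_i \sum_j adj R E i j * (y i 0 - y j 0) ^+ 2
  + 2 * \sum_i adj0 R E i * y i 0 ^+ 2.
Proof.
set A := \sum_i \sum_j adj R E i j * (y i 0 * (y i 0 - y j 0)).
have A_swap : A = \sum_i \sum_j adj R E i j * (y j 0 * (y j 0 - y i 0)).
  rewrite /A exchange_big /=.
  by apply: eq_bigr => i _; apply: eq_bigr => j _; rewrite /adj E_sym.
have -> : \sum_i \sum_j adj R E i j * (y i 0 - y j 0) ^+ 2 = A + A.
  rewrite {2}A_swap -big_split; apply: eq_bigr => i _.
  by rewrite -big_split; apply: eq_bigr => j _ /=; ring.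
have -> : (y^T *m (Hmat R E *m y)) 0 0 = A + \sum_i adj0 R E i * y i 0 ^+ 2.
  rewrite mxE /A -big_split; apply: eq_bigr => i _ /=.
  by rewrite [y^T _ _]mxE Hmat_mulmx_entry mulrDr big_distrr /=; congr (_ + _);
    [apply: eq_bigr => j _|]; ring.
by ring.
Qed.

Lemma Hmat_ker_node_val (y : 'cV[R]_N) : Hmat R E *m y = 0 ->
  forall a i, E a (fnode i) -> node_val y a = y i 0.
Proof.
move=> Hy.
have sq_ge0 i j : 0 <= adj R E i j * (y i 0 - y j 0) ^+ 2.
  by rewrite mulr_ge0 ?ler0n ?sqr_ge0.
have sq0_ge0 i : 0 <= adj0 R E i * y i 0 ^+ 2 by rewrite mulr_ge0 ?ler0n ?sqr_ge0.
have sum_sq_ge0 i : 0 <= \sum_j adj R E i j * (y i 0 - y j 0) ^+ 2.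
  exact: sumr_ge0.
have := Hmat_quad_form y; rewrite Hy mulmx0 mxE mulr0 => /esym/eqP.
rewrite paddr_eq0 ?(sumr_ge0, mulr_ge0) // mulf_eq0 pnatr_eq0 /=.
move=> /andP[/eqP edge_terms0 /eqP leader_terms0] a i Eai.
case: (unliftP ord0 a) Eai => [l ->|->] Eai.
  have row_i0 := psumr_eq0P (fun i _ => sum_sq_ge0 i) edge_terms0 (i := i) isT.
  have /eqP := psumr_eq0P (fun j _ => sq_ge0 i j) row_i0 (i := l) isT.
  by rewrite node_val_fnode /adj Eai mul1r sqrf_eq0 subr_eq0 => /eqP.
have /eqP := psumr_eq0P (fun i _ => sq0_ge0 i) leader_terms0 (i := i) isT.
by rewrite node_val_ord0 /adj0 Eai mul1r sqrf_eq0 => /eqP.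
Qed.

End LaplacianKernel.

Lemma ler_loss_contraction (R : realFieldType) (K M a b : R) : 0 <= K -> K <= M ->
  b <= a -> a <= K * (a - b) -> b <= (1 - (M + 1)^-1) * a.
Proof.
move=> K_ge0 le_KM le_ba a_le.
have M1_gt0 : 0 < M + 1 by rewrite ltr_pwDr ?(le_trans K_ge0).
have : (M + 1)^-1 * a <= a - b.
  rewrite ler_pdivrMl // mulrDl mul1r; apply: (le_trans a_le).
  by rewrite -[X in X <= _]addr0 lerD ?ler_wpM2r ?subr_ge0.
by rewrite mulrBl mul1r; lra.
Qed.

Section WindowContraction.
Variables (R : realType) (N n0 : nat) (E : 'I_n0 -> rel 'I_N.+1).
Variables (P : 'I_n0 -> 'M[R]_N) (g : nat -> 'I_n0) (m n : nat) (x : 'cV[R]_N).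
Hypothesis E_irrefl : forall p a, ~~ E p a a.
Hypothesis P_orthproj : forall p, is_orth_proj_ker (Hmat R (E p)) (P p).
Hypothesis E_sym : forall r (i l : 'I_N),
  E (g r) (fnode l) (fnode i) = E (g r) (fnode i) (fnode l).
Hypothesis union_connected : forall i,
  connect (union_graph E g m (m + n)) ord0 (fnode i).

Let Y s := lprod m (m + s) (fun r => P (g r)) *m x.
Let D := \sum_(s < n) sqnorm (Y s - Y s.+1).
Let k := n%:R * Num.sqrt D.

Let Y0 : Y 0%N = x.
Proof. by rewrite /Y addn0 /lprod big_geq // mul1mx. Qed.

Let YS s : Y s.+1 = P (g (m + s)%N) *m Y s.
Proof. by rewrite /Y addnS lprodSr mulmxA. Qed.

Let sqnorm_loss : sqnorm x - sqnorm (Y n) = D.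
Proof.
have P_proj s : (P (g (m + s)%N))^T = P (g (m + s)%N) /\
    P (g (m + s)%N) *m P (g (m + s)%N) = P (g (m + s)%N).
  by case: (P_orthproj (g (m + s)%N)).
by rewrite -{1}Y0 (sqnorm_telescope n P_proj YS) addrAC subrr add0r.
Qed.

Lemma sqnorm_lprod_le :
  sqnorm (lprod m (m + n) (fun r => P (g r)) *m x) <= sqnorm x.
Proof.
rewrite -subr_ge0 -/(Y n) sqnorm_loss.
by apply: sumr_ge0 => s _; apply: sqnorm_ge0.
Qed.

Let k_ge0 : 0 <= k.
Proof. by rewrite mulr_ge0 ?sqrtr_ge0. Qed.

Let node_val_drift_le s a : (s <= n)%N -> `|node_val (x - Y s) a| <= k.
Proof.
move=> le_sn; rewrite /node_val; case: unlift => [i|]; last by rewrite normr0.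
have := entry_drift_le Y i le_sn; rewrite Y0 !mxE => /le_trans -> //.
by rewrite ler_wpM2r ?sqrtr_ge0 ?ler_nat.
Qed.

Let union_edge_dist_le a b : union_graph E g m (m + n) a b -> b != ord0 ->
  `|node_val x a - node_val x b| <= 2 * k.
Proof.
move=> /existsP[r /andP[le_mr Er]] b_neq0.
have [s r_eq] : exists s, r = (m + s)%N :> nat by exists (r - m)%N; rewrite subnKC.
have lt_sn : (s < n)%N by rewrite -(ltn_add2l m) -r_eq.
have ker : Hmat R (E (g r)) *m Y s.+1 = 0.
  by rewrite YS -r_eq; case: (P_orthproj (g r)).
case: (unliftP ord0 b) Er b_neq0 => [i ->|->] Er; last by rewrite eqxx.
move=> _; have := Hmat_ker_node_val (E_irrefl _) (E_sym r) ker (i := i) Er.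
rewrite -(node_val_fnode (Y s.+1)) => same.
have -> : node_val x a - node_val x (fnode i) =
    node_val (x - Y s.+1) a - node_val (x - Y s.+1) (fnode i).
  by rewrite !node_valB same; ring.
by rewrite mulr_natl mulr2n (le_trans (ler_normB _ _)) // lerD ?node_val_drift_le.
Qed.

Lemma sqnorm_le_window_loss :
  sqnorm x <= 4 * N%:R ^+ 3 * n%:R ^+ 2 *
    (sqnorm x - sqnorm (lprod m (m + n) (fun r => P (g r)) *m x)).
Proof.
have entry_le i : `|x i 0| <= N%:R * (2 * k).
  have := connect_dist_le union_edge_dist_le (mulr_ge0 (ler0n _ 2) k_ge0).
  by move=> /(_ _ (union_connected i)); rewrite node_val_fnode node_val_ord0 subr0 card_ord.
rewrite -/(Y n) sqnorm_loss.
apply: (@le_trans _ _ (\sum_(i < N) (N%:R * (2 * k)) ^+ 2)).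
  apply: ler_sum => i _; rewrite -[_ ^+ 2]real_normK ?num_real //.
  by rewrite ler_pXn2r ?nnegrE ?entry_le ?(le_trans _ (entry_le i)).
rewrite sumr_const card_ord -[_ *+ N]mulr_natl /k !exprMn sqr_sqrtr; last first.
  by apply: sumr_ge0 => s _; apply: sqnorm_ge0.
by rewrite -subr_ge0 (_ : _ - _ = 0) //; ring.
Qed.

Lemma sqnorm_lprod_window_contraction (M : nat) : (n <= M)%N ->
  sqnorm (lprod m (m + n) (fun r => P (g r)) *m x)
    <= (1 - (4 * N%:R ^+ 3 * M%:R ^+ 2 + 1)^-1) * sqnorm x.
Proof.
move=> le_nM; apply: ler_loss_contraction sqnorm_lprod_le sqnorm_le_window_loss.
  by rewrite !mulr_ge0 ?exprn_ge0.
by rewrite ler_wpM2l ?mulr_ge0 ?exprn_ge0 // ler_pXn2r ?nnegrE ?ler_nat.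
Qed.

End WindowContraction.

Lemma induced_norm_le (R : realType) (N : nat) (A : 'M[R]_N) (d : R) : 0 <= d ->
  (forall x, sqnorm (A *m x) <= d ^+ 2 * sqnorm x) -> induced_norm A <= d.
Proof.
move=> d_ge0 A_le; apply: ge_sup.
  exists (eucl_norm (A *m 0)), 0 => //=.
  by rewrite /eucl_norm big1 ?sqrtr0 ?ler01 // => i _; rewrite mxE expr0n.
move=> _ [x /= x_le1 <-].
have sqnorm_x_le1 : sqnorm x <= 1 by rewrite -(ler_sqrt _ ler01) sqrtr1.
rewrite /eucl_norm -/(sqnorm _) -(ger0_norm d_ge0) -sqrtr_sqr ler_sqrt ?sqr_ge0 //.
by rewrite (le_trans (A_le x)) // ler_piMr ?sqr_ge0.
Qed.

Lemma dwell_time_le (R : realDomainType) (t : nat -> R) (tau : R) :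
  (forall j, tau <= t j.+1 - t j) -> forall a d, t a + d%:R * tau <= t (a + d)%N.
Proof.
move=> dwell a; elim=> [|d IH]; first by rewrite mul0r addr0 addn0.
by rewrite addnS -natr1 mulrDl mul1r addrA; have := dwell (a + d)%N; lra.
Qed.

Lemma switchings_le (R : archiRealFieldType) (t : nat -> R) (tau Tc : R) a b :
  0 < tau -> (forall j, tau <= t j.+1 - t j) -> (a <= b)%N -> t b - t a <= Tc ->
  (b - a <= Num.truncn (Tc / tau))%N.
Proof.
move=> tau_gt0 dwell le_ab le_Tc.
have := dwell_time_le dwell a (b - a); rewrite subnKC // => le_tb.
have le_ba : (b - a)%:R <= Tc / tau by rewrite ler_pdivlMr //; lra.
by rewrite truncn_ge_nat ?(le_trans _ le_ba).
Qed.

Lemma one_subV_le_sqr (R : realFieldType) (c : R) :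
  1 - c^-1 <= (1 - (2 * c)^-1) ^+ 2.
Proof.
have -> : c^-1 = 2 * (2 * c)^-1 by rewrite invfM mulrA divff ?mul1r ?pnatr_eq0.
by set u := (2 * c)^-1; nra.
Qed.

Lemma one_subV2_gt0_lt1 (R : realFieldType) (c : R) :
  1 <= c -> 0 < 1 - (2 * c)^-1 < 1.
Proof.
move=> c_ge1; have c_gt0 : 0 < c := lt_le_trans ltr01 c_ge1.
have : (2 * c)^-1 < 1 by rewrite invf_lt1 ?mulr_gt0 //; lra.
have : 0 < (2 * c)^-1 by rewrite invr_gt0 mulr_gt0.
by move=> *; apply/andP; split; lra.
Qed.

Set Strict Implicit. Unset Implicit Arguments.

Theorem lemma1 (R : realType) (N n0 : nat)
  (E : 'I_n0 -> rel 'I_N.+1)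
  (P : 'I_n0 -> 'M[R]_N)
  (t : nat -> R) (tau : R) (sigma : R -> 'I_n0)
  (Tc : R) (jk : nat -> nat) :
  (* graphs: ordered pairs (j,i) with j <> i *)
  (forall p a, ~~ E p a a) ->
  (* P p is the orthogonal projection onto ker H_p *)
  (forall p, is_orth_proj_ker (Hmat R (E p)) (P p)) ->
  (* switching signal with dwell time tau *)
  t 0%N = 0 -> 0 < tau -> (forall j, tau <= t j.+1 - t j) ->
  (forall j s, t j <= s -> s < t j.+1 -> sigma s = sigma (t j)) ->
  (* the follower subgraph is undirected for all t >= 0 *)
  (forall s, 0 <= s -> forall i l : 'I_N,
      E (sigma s) (fnode l) (fnode i) = E (sigma s) (fnode i) (fnode l)) ->
  (* subsequence of switching instants *)
  0 < Tc -> jk 0%N = 0%N -> (forall k, (jk k < jk k.+1)%N) ->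
  (forall k, t (jk k.+1) - t (jk k) <= Tc) ->
  (forall k (i : 'I_N),
      connect (union_graph E (fun r => sigma (t r)) (jk k) (jk k.+1))
              ord0 (fnode i)) ->
  exists delta : R, 0 < delta < 1 /\
    forall k, induced_norm (lprod (jk k) (jk k.+1) (fun r => P (sigma (t r))))
              <= delta.
Proof.
move=> E_irrefl P_orthproj t0 tau_gt0 dwell _ E_sym _ _ jk_lt jk_Tc connected.
have t_ge0 r : 0 <= t r.
  have := dwell_time_le dwell 0 r; rewrite t0 add0r add0n; apply: le_trans.
  by rewrite mulr_ge0 ?ler0n ?ltW.
set M := Num.truncn (Tc / tau).
set c : R := 4 * N%:R ^+ 3 * M%:R ^+ 2 + 1.
have /one_subV2_gt0_lt1 delta_01 : 1 <= c by rewrite lerDr !mulr_ge0 ?exprn_ge0.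
exists (1 - (2 * c)^-1); split => // k.
apply: induced_norm_le => [|x]; first by case/andP: delta_01 => /ltW.
set n := (jk k.+1 - jk k)%N.
have jk_split : jk k.+1 = (jk k + n)%N by rewrite subnKC // ltnW.
have le_nM : (n <= M)%N := switchings_le tau_gt0 dwell (ltnW (jk_lt k)) (jk_Tc k).
have connected_k i : connect (union_graph E (fun r => sigma (t r)) (jk k) (jk k + n))
    ord0 (fnode i) by rewrite -jk_split.
have := sqnorm_lprod_window_contraction x E_irrefl P_orthproj
  (fun r => E_sym (t r) (t_ge0 r)) connected_k le_nM.
rewrite -jk_split => /le_trans -> //.
by rewrite ler_wpM2r ?sqnorm_ge0 ?one_subV_le_sqr.
Qed.
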